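(* Let $G$ be a directed graph with vertices $s,t$, $k\ge1$, and $e\in E(G)$. The multiplicity function $\mu_e:U^k_{\mathrm{lr}}\to\mathbb N$ is modular on the lattice $L^*$, i.e. $\mu_e(C_1\vee C_2)+\mu_e(C_1\wedge C_2)=\mu_e(C_1)+\mu_e(C_2)$ for all $C_1,C_2\in L^*$.
   Context: An $s$-$t$ cut of a directed graph $G$ is a set $X\subseteq E(G)$ such that removing $X$ leaves no directed $s$-$t$ path; $\Gamma_G(s,t)$ is the set of $s$-$t$ cuts of minimum cardinality $\lambda(G)$. Fix a maximum-size collection $\mathcal P$ of pairwise edge-disjoint directed $s$-$t$ paths (each minimum $s$-$t$ cut contains exactly one edge of each path in $\mathcal P$). For $X,Y\in\Gamma_G(s,t)$, $S_{\min}(X\cup Y)$ (resp. $S_{\max}(X\cup Y)$) consists, for each $p\in\mathcal P$, of the edge of $(X\cup Y)\cap p$ occurring first (resp. last) along $p$. $X\le Y$ means every directed $s$-$t$ path meets an edge of $X$ at or before an edge of $Y$. $U^k_{\mathrm{lr}}$ is the set of $k$-tuples $[X_1,\dots,X_k]$ of elements of $\Gamma_G(s,t)$ with $X_i\le X_j$ for all $i<j$. $L^*$ is the lattice on $U^k_{\mathrm{lr}}$ with componentwise order ($[X_i]\preceq[Y_i]$ iff $X_i\le Y_i$ for all $i$), join $[X_i]_i\vee[Y_i]_i=[S_{\max}(X_i\cup Y_i)]_i$ and meet $[X_i]_i\wedge[Y_i]_i=[S_{\min}(X_i\cup Y_i)]_i$. For $C=[X_1,\dots,X_k]$, $\mu_e(C)$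 is the number of indices $i$ with $e\in X_i$. *)

From mathcomp Require Import all_boot.
Set Implicit Arguments. Unset Strict Implicit. Unset Printing Implicit Defensive.

Section Graph.
Variables (V E : finType) (src tgt : E -> V).

Fixpoint walk_from (x : V) (p : seq E) : bool :=
  if p is e :: p' then (src e == x) && walk_from (tgt e) p' else true.

Definition st_path (s t : V) (p : seq E) : bool :=
  [&& walk_from s p, last s (map tgt p) == t & uniq (s :: map tgt p)].

Definition is_cut (s t : V) (X : {set E}) : Prop :=
  forall p, st_path s t p -> has (fun e => e \in X) p.

Definition is_min_cut (s t : V) (X : {set E}) : Prop :=
  is_cut s t X /\ forall Y : {set E}, is_cut s t Y -> #|X| <= #|Y|.

Definition edge_disjoint (p q : seq E) : bool := ~~ has (fun e => e \in p) q.

Definition max_disjoint_paths (s t : V) (P : seq (seq E)) : Prop :=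
  [/\ all (st_path s t) P, pairwise edge_disjoint P &
      forall Q : seq (seq E), all (st_path s t) Q -> pairwise edge_disjoint Q ->
        size Q <= size P].

Definition S_min (P : seq (seq E)) (A : {set E}) : {set E} :=
  [set e | has (fun p => ohead [seq f <- p | f \in A] == Some e) P].
Definition S_max (P : seq (seq E)) (A : {set E}) : {set E} :=
  [set e | has (fun p => ohead (rev [seq f <- p | f \in A]) == Some e) P].

Definition cut_le (s t : V) (X Y : {set E}) : Prop :=
  forall p, st_path s t p ->
    exists i j x y, [/\ i <= j, onth p i = Some x, x \in X,
                        onth p j = Some y & y \in Y].

Definition in_Ulr (s t : V) (k : nat) (C : 'I_k -> {set E}) : Prop :=
  (forall i, is_min_cut s t (C i)) /\
  (forall i j : 'I_k, i < j -> cut_le s t (C i) (C j)).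

Definition Ljoin (P : seq (seq E)) (k : nat) (C1 C2 : 'I_k -> {set E}) :=
  fun i => S_max P (C1 i :|: C2 i).
Definition Lmeet (P : seq (seq E)) (k : nat) (C1 C2 : 'I_k -> {set E}) :=
  fun i => S_min P (C1 i :|: C2 i).

Definition mult (k : nat) (e : E) (C : 'I_k -> {set E}) : nat :=
  #|[set i : 'I_k | e \in C i]|.

End Graph.

(* Both multiplicities are sums over the index i, so it suffices that for any two minimum
   cuts X, Y and any edge e,  [e in S_max(X u Y)] + [e in S_min(X u Y)] = [e in X] + [e in Y].
   Menger's theorem (unit flows grown along augmenting paths, then decomposed into paths) gives
   |X| <= |P|.  As X meets each of the |P| edge-disjoint paths of P, X consists of exactly one
   edge on each path and of nothing else.  Hence on the path q through e, X u Y is {x, y} with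
   x in X and y in Y; S_min picks the first and S_max the last of them, which are x and y in
   some order (both equal to x if x = y). *)

From mathcomp Require Import all_boot zify.
Set Implicit Arguments. Unset Strict Implicit. Unset Printing Implicit Defensive.

Lemma card_sum_mem (T : finType) (A : {set T}) : #|A| = \sum_(x : T) (x \in A).
Proof. by rewrite -sum1_card big_mkcond /=; apply: eq_bigr => x _; case: (x \in A). Qed.

Lemma card_set_seq (T : finType) (s : seq T) (B : {set T}) :
  uniq s -> #|[set x in s] :&: B| = count [in B] s.
Proof.
move=> us; rewrite -size_filter; have /card_uniqP <- := filter_uniq [in B] us.
by apply: eq_card => x; rewrite !inE mem_filter andbC.
Qed.

Lemma card_exchange (T : finType) (F Fw Bw B : {set T}) :
  [disjoint Fw & F] -> Bw \subset F ->
  #|((F :|: Fw) :\: Bw) :&: B| + #|Bw :&: B| = #|F :&: B| + #|Fw :&: B|.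
Proof.
move=> dFw /subsetP sBw; rewrite !card_sum_mem -!big_split.
apply: eq_bigr => x _; rewrite !inE.
case xF: (x \in F).
  have -> : (x \in Fw) = false by apply: contraTF xF => /(disjointFr dFw) ->.
  by case: (x \in Bw); case: (x \in B).
rewrite (contraFF (sBw x) xF).
by case: (x \in Fw); case: (x \in B).
Qed.

Section Walks.
Variables (V A : finType) (fr to : A -> V).

Lemma walk_from_cat x p1 p2 : walk_from fr to x (p1 ++ p2) =
  walk_from fr to x p1 && walk_from fr to (last x (map to p1)) p2.
Proof. by elim: p1 x => //= a p IH x; rewrite IH andbA. Qed.

Lemma walk_exits (R : {set V}) x p : x \in R -> walk_from fr to x p ->
  last x (map to p) \notin R -> has (fun a => (fr a \in R) && (to a \notin R)) p.
Proof.
elim: p x => [|a p IH] x /=; first by move=> ->.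
move=> xR /andP[/eqP fa w] l; case: (boolP (to a \in R)) => toR.
  by rewrite (IH _ toR w l) orbT.
by rewrite fa xR.
Qed.

Lemma walk_count_balance x p v : walk_from fr to x p ->
  count (fun a => fr a == v) p + (last x (map to p) == v) =
  count (fun a => to a == v) p + (x == v).
Proof.
elim: p x => [|a p IH] x /=; first by rewrite addnC.
by move=> /andP[/eqP <- /IH]; lia.
Qed.

Lemma walk_shorten x p : walk_from fr to x p -> exists q,
  [/\ walk_from fr to x q, uniq (x :: map to q),
      last x (map to q) = last x (map to p) & {subset q <= p}].
Proof.
elim: p x => [|a p IH] x /=; first by exists [::].
move=> /andP[/eqP fa /IH [q [wq uq lq sq]]].
have sqa : {subset q <= a :: p} by move=> b /sq; rewrite inE orbC => ->.
case: (boolP (x \in to a :: map to q)) => [|xq]; last first.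
  exists (a :: q); split => /=; [by rewrite fa eqxx | by rewrite xq | by [] |].
  by move=> b; rewrite !inE => /orP[->|/sq ->]; rewrite ?orbT.
rewrite inE => /orP[/eqP xa|/mapP [b bq xb]]; first by exists q; rewrite xa.
case/splitPr: bq wq uq lq sqa => q1 q2 wq uq lq sqa.
exists q2; split.
- by move: wq; rewrite walk_from_cat /= -xb => /and3P[_ _].
- by move: uq; rewrite map_cat -cat_cons cat_uniq /= -xb => /and3P[_ _].
- by rewrite -lq map_cat last_cat /= xb.
- by move=> c cq; apply: sqa; rewrite mem_cat inE cq !orbT.
Qed.

Definition arc_rel (D : pred A) : rel V :=
  fun x y => [exists a, [&& D a, fr a == x & to a == y]].

Lemma connect_arc_rel_step D x a :
  connect (arc_rel D) x (fr a) -> D a -> connect (arc_rel D) x (to a).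
Proof.
move=> c Da; apply: (connect_trans c); apply: connect1.
by apply/existsP; exists a; rewrite Da !eqxx.
Qed.

Lemma connect_arc_rel_simple_walk D x y : connect (arc_rel D) x y ->
  exists p, [/\ walk_from fr to x p, uniq (x :: map to p),
                last x (map to p) = y & all D p].
Proof.
move/connectP=> [vs pth ->] {y}.
suff [p [wp Dp lp]] : exists p, [/\ walk_from fr to x p, all D p & last x (map to p) = last x vs].
  have [q [wq uq lq sq]] := walk_shorten wp.
  by exists q; split; rewrite ?lq //; apply/allP => a /sq /(allP Dp).
elim: vs x pth => [|v vs IH] x /=; first by exists [::].
move=> /andP[/existsP [a /and3P[Da /eqP fa /eqP ta]] /IH [q [wq Dq lq]]].
by exists (a :: q); rewrite /= fa eqxx ta wq Da Dq lq.
Qed.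

End Walks.

Section Flows.
Variables (V E : finType) (src tgt : E -> V).

Definition out_deg (F : {set E}) v := #|F :&: [set e | src e == v]|.
Definition in_deg (F : {set E}) v := #|F :&: [set e | tgt e == v]|.

Definition is_flow s t (F : {set E}) n :=
  [/\ forall v, v != s -> v != t -> out_deg F v = in_deg F v,
      in_deg F s = 0 & out_deg F s = n].

Definition leaving (R : {set V}) := [set e | (src e \in R) && (tgt e \notin R)].
Definition entering (R : {set V}) := [set e | (tgt e \in R) && (src e \notin R)].

Lemma flow0 s t : is_flow s t set0 0.
Proof. by split=> [v _ _||]; rewrite /out_deg /in_deg !set0I cards0. Qed.

Lemma sum_card_fibres (f : E -> V) (F : {set E}) (R : {set V}) :
  \sum_(v in R) #|F :&: [set e | f e == v]| = #|F :&: [set e | f e \in R]|.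
Proof.
rewrite -sum1_card (partition_big f (mem R)) => [|e]; last by rewrite !inE => /andP[].
apply: eq_bigr => v vR; rewrite -sum1_card; apply: eq_bigl => e; rewrite !inE.
by case: (eqVneq (f e) v) => [->|]; rewrite ?vR ?andbF ?andbT.
Qed.

Lemma flow_across s t F n (R : {set V}) : is_flow s t F n -> s \in R -> t \notin R ->
  n + #|F :&: entering R| = #|F :&: leaving R|.
Proof.
move=> [cons ins outs] sR tR.
have out_in : \sum_(v in R) out_deg F v = \sum_(v in R) in_deg F v + n.
  rewrite (bigD1 s) // [in RHS](bigD1 s) //= ins outs addnC; congr (_ + _).
  by apply: eq_bigr => v /andP[vR vs]; apply: cons => //; apply: contraNneq tR => <-.
have crossing : #|F :&: [set e | src e \in R]| + #|F :&: entering R| =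
                #|F :&: [set e | tgt e \in R]| + #|F :&: leaving R|.
  rewrite !card_sum_mem -!big_split; apply: eq_bigr => e _; rewrite !inE.
  by case: (e \in F); case: (src e \in R); case: (tgt e \in R).
by move: out_in crossing; rewrite /out_deg /in_deg !sum_card_fibres; lia.
Qed.

Lemma leaving_cut s t (R : {set V}) : s \in R -> t \notin R -> is_cut src tgt s t (leaving R).
Proof.
move=> sR tR p /and3P[w /eqP l _]; have := walk_exits sR w; rewrite l => /(_ tR).
by apply: sub_has => e; rewrite inE.
Qed.

Lemma cut_neq s t X : is_cut src tgt s t X -> s != t.
Proof. by apply: contraPneq => -> /(_ [::]); rewrite /st_path /= eqxx => /(_ isT). Qed.

Lemma flow_has_path s t F n : is_flow s t F n.+1 ->
  exists2 p, st_path src tgt s t p & {subset p <= F}.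
Proof.
move=> fl; pose R := [set v | connect (arc_rel src tgt [in F]) s v].
have sR : s \in R by rewrite inE connect0.
have : t \in R.
  apply: contraT => tR; have := flow_across fl sR tR.
  suff -> : F :&: leaving R = set0 by rewrite cards0.
  apply/setP => e; rewrite !inE; apply/and3P => -[eF srcR].
  by rewrite (connect_arc_rel_step srcR).
rewrite inE => /connect_arc_rel_simple_walk [p [wp up lp Fp]].
by exists p; [rewrite /st_path wp up lp eqxx | apply/allP].
Qed.

Lemma flow_remove_path s t F n p : s != t -> is_flow s t F n.+1 ->
  st_path src tgt s t p -> {subset p <= F} -> is_flow s t (F :\: [set e in p]) n.
Proof.
move=> st [cons ins outs] /and3P[wp /eqP lp up] pF.
have deg (Pr : pred E) : #|(F :\: [set e in p]) :&: [set e | Pr e]| + count Pr p =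
                         #|F :&: [set e | Pr e]|.
  have := @card_exchange _ F set0 [set e in p] [set e | Pr e].
  rewrite setU0 set0I cards0 addn0 card_set_seq; last by case/andP: up => _ /map_uniq.
  rewrite (@eq_count _ _ Pr); last by move=> e; rewrite inE.
  by apply; [rewrite disjoints_subset sub0set | apply/subsetP => e; rewrite inE => /pF].
have bal v := walk_count_balance v wp; rewrite lp in bal.
split.
- move=> v vs vt; move: (deg (fun e => src e == v)) (deg (fun e => tgt e == v)) (bal v).
  move: (cons v vs vt); rewrite eq_sym in vs; rewrite eq_sym in vt.
  by rewrite /out_deg /in_deg (negbTE vs) (negbTE vt); lia.
- by move: (deg (fun e => tgt e == s)) ins; rewrite /in_deg; lia.
- move: (deg (fun e => src e == s)) (deg (fun e => tgt e == s)) (bal s) ins outs.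
  by rewrite /out_deg /in_deg eqxx eq_sym (negbTE st); lia.
Qed.

Lemma flow_disjoint_paths s t F n : s != t -> is_flow s t F n ->
  exists Q, [/\ size Q = n, all (st_path src tgt s t) Q, pairwise (@edge_disjoint E) Q
              & {in Q, forall q, {subset q <= F}}].
Proof.
move=> st; elim: n F => [|n IH] F fl; first by exists [::].
have [p stp pF] := flow_has_path fl.
have [Q [sQ stQ dQ QF]] := IH _ (flow_remove_path st fl stp pF).
exists (p :: Q); split => /=; [by rewrite sQ | by rewrite stp | |].
- rewrite dQ andbT; apply/allP => q qQ; apply/hasPn => e /(QF q qQ).
  by rewrite !inE => /andP[].
- move=> q; rewrite inE => /predU1P[-> //|qQ] e /(QF q qQ).
  by rewrite inE => /andP[].
Qed.

(* Residual arcs: (e, true) traverses e forwards and is usable when e is not in F,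
   (e, false) traverses it backwards and is usable when e is in F. *)
Definition res_src (a : E * bool) := if a.2 then src a.1 else tgt a.1.
Definition res_tgt (a : E * bool) := if a.2 then tgt a.1 else src a.1.
Definition residual (F : {set E}) : pred (E * bool) :=
  fun a => if a.2 then a.1 \notin F else a.1 \in F.
Definition augment (F : {set E}) (r : seq (E * bool)) :=
  (F :|: [set e | (e, true) \in r]) :\: [set e | (e, false) \in r].

Lemma card_arcs_dir (r : seq (E * bool)) b (B : {set E}) : uniq r ->
  #|[set e | (e, b) \in r] :&: B| = count (fun a => (a.2 == b) && (a.1 \in B)) r.
Proof.
move=> ur; have -> : [set e | (e, b) \in r] = [set e in [seq a.1 | a <- r & a.2 == b]].
  apply/setP => e; rewrite !inE; apply/idP/mapP => [erb|[[e' b'] /= + ->]].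
    by exists (e, b); rewrite // mem_filter eqxx.
  by rewrite mem_filter /= => /andP[/eqP ->].
rewrite card_set_seq ?count_map ?count_filter; last first.
  rewrite map_inj_in_uniq ?filter_uniq // => -[e1 b1] [e2 b2].
  by rewrite !mem_filter /= => /andP[/eqP -> _] /andP[/eqP -> _] ->.
by apply: eq_count => a; rewrite /= andbC.
Qed.

Lemma count_res_src v (r : seq (E * bool)) : count (fun a => res_src a == v) r =
  count (fun a => (a.2 == true) && (a.1 \in [set e | src e == v])) r +
  count (fun a => (a.2 == false) && (a.1 \in [set e | tgt e == v])) r.
Proof. by elim: r => //= -[e []] r ->; rewrite /res_src !inE /=; lia. Qed.

Lemma count_res_tgt v (r : seq (E * bool)) : count (fun a => res_tgt a == v) r =
  count (fun a => (a.2 == true) && (a.1 \in [set e | tgt e == v])) r +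
  count (fun a => (a.2 == false) && (a.1 \in [set e | src e == v])) r.
Proof. by elim: r => //= -[e []] r ->; rewrite /res_tgt !inE /=; lia. Qed.

Lemma flow_augment s t F n r : s != t -> is_flow s t F n ->
  walk_from res_src res_tgt s r -> uniq (s :: map res_tgt r) ->
  last s (map res_tgt r) = t -> all (residual F) r -> is_flow s t (augment F r) n.+1.
Proof.
move=> st [cons ins outs] wr ur lr rF.
have deg B : #|augment F r :&: B| + count (fun a => (a.2 == false) && (a.1 \in B)) r =
             #|F :&: B| + count (fun a => (a.2 == true) && (a.1 \in B)) r.
  have ur' : uniq r by case/andP: ur => _ /map_uniq.
  rewrite -!card_arcs_dir //; apply: card_exchange.
    by rewrite disjoints_subset; apply/subsetP => e; rewrite !inE => /(allP rF).
  by apply/subsetP => e; rewrite inE => /(allP rF).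
have bal v := walk_count_balance v wr; rewrite lr in bal.
have no_in_s : count (fun a => res_tgt a == s) r = 0.
  by case/andP: ur => /count_memPn; rewrite count_map.
rewrite count_res_tgt in no_in_s.
split.
- move=> v vs vt; move: (deg [set e | src e == v]) (deg [set e | tgt e == v]) (bal v).
  move: (cons v vs vt); rewrite eq_sym in vs; rewrite eq_sym in vt.
  by rewrite /out_deg /in_deg count_res_src count_res_tgt (negbTE vs) (negbTE vt); lia.
- by move: (deg [set e | tgt e == s]) ins no_in_s; rewrite /in_deg; lia.
- move: (deg [set e | src e == s]) (deg [set e | tgt e == s]) (bal s) ins outs no_in_s.
  by rewrite /out_deg /in_deg count_res_src count_res_tgt eqxx eq_sym (negbTE st); lia.
Qed.

Lemma residual_unreachable_cut s t F n : is_flow s t F n ->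
  ~~ connect (arc_rel res_src res_tgt (residual F)) s t ->
  exists2 X, is_cut src tgt s t X & #|X| = n.
Proof.
move=> fl not_st; pose R := [set v | connect (arc_rel res_src res_tgt (residual F)) s v].
have sR : s \in R by rewrite inE connect0.
have tR : t \notin R by rewrite inE.
exists (leaving R); first exact: leaving_cut.
have no_entering : F :&: entering R = set0.
  apply/setP => e; rewrite !inE; apply/and3P => -[eF tgtR].
  by rewrite (connect_arc_rel_step (a := (e, false)) tgtR).
have leaving_sub : F :&: leaving R = leaving R.
  apply/setIidPr/subsetP => e; rewrite !inE => /andP[srcR]; apply: contraNT => eF.
  by rewrite (connect_arc_rel_step (a := (e, true)) srcR).
by have := flow_across fl sR tR; rewrite no_entering leaving_sub cards0 addn0.
Qed.

Lemma min_cut_flow s t X n : is_min_cut src tgt s t X -> n <= #|X| ->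
  exists F, is_flow s t F n.
Proof.
move=> [cX minX]; have st := cut_neq cX.
elim: n => [|n IH] ltnX; first by exists set0; apply: flow0.
have [F fl] := IH (ltnW ltnX).
case: (boolP (connect (arc_rel res_src res_tgt (residual F)) s t)) => [|not_st].
  move/connect_arc_rel_simple_walk=> [r [wr ur lr rF]].
  by exists (augment F r); apply: flow_augment.
have [Y cY cardY] := residual_unreachable_cut fl not_st.
by move: (minX Y cY); rewrite cardY leqNgt ltnX.
Qed.

Lemma card_min_cut_le_paths s t P X : max_disjoint_paths src tgt s t P ->
  is_min_cut src tgt s t X -> #|X| <= size P.
Proof.
move=> [_ _ maxP] mX; have [F fl] := min_cut_flow mX (leqnn _).
have [Q [<- stQ dQ _]] := flow_disjoint_paths (cut_neq mX.1) fl.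
exact: maxP stQ dQ.
Qed.

End Flows.

Lemma ohead_mem (T : eqType) (s : seq T) x : ohead s == Some x -> x \in s.
Proof. by case: s => //= y s /eqP[->]; apply: mem_head. Qed.

Lemma ohead_ends_count (T : eqType) (s : seq T) x y e : uniq s -> s =i [:: x; y] ->
  (ohead (rev s) == Some e) + (ohead s == Some e) = (e == x) + (e == y).
Proof.
move=> us sxy; have : size s <= 2.
  by rewrite -[2]/(size [:: x; y]) uniq_leq_size // => z; rewrite sxy.
have Some_eq (u v : T) : (Some u == Some v) = (u == v) by apply/eqP/eqP => [[]|->].
case: s us sxy => [|a [|b [|//]]] /= us sxy _.
- by have := sxy x; rewrite !inE eqxx.
- have := sxy x; have := sxy y; rewrite !inE !eqxx orbT /= => /eqP <- /eqP <-.
  by rewrite Some_eq eq_sym.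
have uxy : uniq [:: x; y].
  rewrite /= andbT inE; apply: contraTneq us => xy; subst y.
  have := sxy a; have := sxy b; rewrite !inE !eqxx /= !orbT !orbb => /esym/eqP -> /esym/eqP ->.
  by rewrite eqxx.
have /permP/(_ (pred1 e)) /= := uniq_perm (us : uniq [:: a; b]) uxy sxy.
by rewrite /rev /= !Some_eq !addn0 addnC (eq_sym e x) (eq_sym e y).
Qed.

Lemma sum_pos_nat (T : eqType) (l : seq T) (f : T -> nat) : {in l, forall q, 0 < f q} ->
  \sum_(q <- l) f q = size l + \sum_(q <- l) (f q).-1.
Proof.
move=> pos; rewrite -sum1_size -big_split /=.
by apply: eq_big_seq => q /pos; case: (f q).
Qed.

Section Transversal.
Variables (V E : finType) (src tgt : E -> V).

Lemma card_set_on_disjoint (X : {set E}) (P : seq (seq E)) : pairwise (@edge_disjoint E) P ->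
  #|[set e in X | has (fun q => e \in q) P]| = \sum_(q <- P) #|[set e in X | e \in q]|.
Proof.
elim: P => [|q P IH] /=.
  move=> _; rewrite big_nil; apply/eqP; rewrite cards_eq0.
  by apply/eqP/setP => e; rewrite !inE andbF.
move/andP=> [dq dP]; rewrite big_cons -IH // !card_sum_mem -big_split; apply: eq_bigr => e _.
rewrite !inE; case: (e \in X) => //=; case eq: (e \in q) => //=.
by case: hasP => // -[q' q'P eq']; move: (allP dq q' q'P) => /hasPn/(_ e eq'); rewrite eq.
Qed.

Lemma min_cut_transversal s t P X : max_disjoint_paths src tgt s t P ->
  is_min_cut src tgt s t X ->
  X \subset [set e | has (fun q => e \in q) P] /\ {in P, forall q, #|[set e in X | e \in q]| = 1}.
Proof.
move=> mP mX; have le_size := card_min_cut_le_paths mP mX.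
case: mP mX => [stP dP _] [cX _].
have pos : {in P, forall q, 0 < #|[set e in X | e \in q]|}.
  move=> q qP; have /hasP[e eq eX] := cX q (allP stP q qP).
  by apply/card_gt0P; exists e; rewrite !inE eX eq.
have on_paths_sub : [set e in X | has (fun q => e \in q) P] \subset X.
  by apply/subsetP => e; rewrite inE => /andP[].
have card_on_paths := card_set_on_disjoint X dP; rewrite sum_pos_nat // in card_on_paths.
have /eqP excess0 : \sum_(q <- P) (#|[set e in X | e \in q]|).-1 == 0.
  rewrite -leqn0 -(leq_add2l (size P)) addn0 -card_on_paths.
  exact: leq_trans (subset_leq_card on_paths_sub) le_size.
split.
- have /eqP <- : [set e in X | has (fun q => e \in q) P] == X.
    by rewrite eqEcard on_paths_sub card_on_paths excess0 addn0.
  by apply/subsetP => e; rewrite !inE => /andP[].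
- move: excess0 => /eqP; rewrite sum_nat_seq_eq0 => /allP all0 q qP.
  by move: (pos q qP) (all0 q qP); case: #|_| => // -[].
Qed.

Lemma disjoint_paths_mem_eq (P : seq (seq E)) e q1 q2 : pairwise (@edge_disjoint E) P ->
  q1 \in P -> q2 \in P -> e \in q1 -> e \in q2 -> q1 = q2.
Proof.
elim: P => [|q P IH] //= /andP[dq dP].
have apart q' : q' \in P -> e \in q -> e \in q' -> False.
  by move=> q'P eq eq'; move: (allP dq q' q'P) => /hasPn/(_ e eq'); rewrite eq.
rewrite !inE => /predU1P[->|q1P] /predU1P[->|q2P] e1 e2 //; last exact: IH.
- by case: (apart _ q2P e1 e2).
- by case: (apart _ q1P e2 e1).
Qed.

Lemma has_ohead_on_path (h : seq E -> seq E) (P : seq (seq E)) (A : {set E}) q e :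
  (forall r, {subset h r <= r}) -> pairwise (@edge_disjoint E) P -> q \in P -> e \in q ->
  has (fun p => ohead (h [seq f <- p | f \in A]) == Some e) P =
  (ohead (h [seq f <- q | f \in A]) == Some e).
Proof.
move=> hsub dP qP eq; apply/hasP/idP => [[q' q'P]|]; last by exists q.
move=> q'e; have /hsub : e \in h [seq f <- q' | f \in A] by exact: ohead_mem.
by rewrite mem_filter => /andP[_ eq']; rewrite (disjoint_paths_mem_eq dP qP q'P eq eq').
Qed.

Lemma S_min_sub P (A : {set E}) : S_min P A \subset A.
Proof.
apply/subsetP => e; rewrite inE => /hasP[q _ /ohead_mem].
by rewrite mem_filter => /andP[].
Qed.

Lemma S_max_sub P (A : {set E}) : S_max P A \subset A.
Proof.
apply/subsetP => e; rewrite inE => /hasP[q _ /ohead_mem].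
by rewrite mem_rev mem_filter => /andP[].
Qed.

Lemma filter_mem_two_cuts (q : seq E) (X Y : {set E}) x y :
  [set f in X | f \in q] = [set x] -> [set f in Y | f \in q] = [set y] ->
  [seq f <- q | f \in X :|: Y] =i [:: x; y].
Proof.
have onq (Z : {set E}) z f : [set f in Z | f \in q] = [set z] -> (f \in Z) && (f \in q) = (f == z).
  by move=> /setP/(_ f); rewrite !inE.
move=> Xq Yq f; rewrite mem_filter !inE andb_orl.
by rewrite (onq _ _ _ Xq) (onq _ _ _ Yq).
Qed.

Lemma S_max_S_min_count s t P X Y e : max_disjoint_paths src tgt s t P ->
  is_min_cut src tgt s t X -> is_min_cut src tgt s t Y ->
  (e \in S_max P (X :|: Y)) + (e \in S_min P (X :|: Y)) = (e \in X) + (e \in Y).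
Proof.
move=> mP mX mY; have [X_on X1] := min_cut_transversal mP mX.
have [Y_on Y1] := min_cut_transversal mP mY.
case: (boolP (e \in X :|: Y)) => [eXY|]; last first.
  move=> eXY; rewrite (contraNF (subsetP (S_max_sub _ _) e) eXY).
  rewrite (contraNF (subsetP (S_min_sub _ _) e) eXY).
  by move: eXY; rewrite inE negb_or => /andP[/negbTE -> /negbTE ->].
case: mP => [stP dP _].
have /hasP[q qP eq] : has (fun q => e \in q) P.
  by move: eXY; rewrite inE => /orP[/(subsetP X_on)|/(subsetP Y_on)]; rewrite inE.
have [x Xq] : exists x, [set f in X | f \in q] = [set x] by apply/cards1P; rewrite X1.
have [y Yq] : exists y, [set f in Y | f \in q] = [set y] by apply/cards1P; rewrite Y1.
have mem_onq (Z : {set E}) z : [set f in Z | f \in q] = [set z] -> (e \in Z) = (e == z).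
  by move=> /setP/(_ e); rewrite !inE eq andbT.
have uq : uniq q by case/and3P: (allP stP q qP) => _ _ /= /andP[_ /map_uniq].
have rev_sub (r : seq E) : {subset rev r <= r} by move=> f; rewrite mem_rev.
rewrite !inE (has_ohead_on_path _ rev_sub dP qP eq).
rewrite (has_ohead_on_path (h := id) _ (fun _ _ => id) dP qP eq).
rewrite (mem_onq _ _ Xq) (mem_onq _ _ Yq).
by apply: ohead_ends_count; [exact: filter_uniq uq | exact: filter_mem_two_cuts].
Qed.

End Transversal.

Theorem lemma3 (V E : finType) (src tgt : E -> V) (s t : V)
    (P : seq (seq E)) (k : nat) (e : E)
    (hP : max_disjoint_paths src tgt s t P) (hk : 1 <= k)
    (C1 C2 : 'I_k -> {set E}) :
  in_Ulr src tgt s t C1 -> in_Ulr src tgt s t C2 ->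
  mult e (Ljoin P C1 C2) + mult e (Lmeet P C1 C2) = mult e C1 + mult e C2.
Proof.
move=> [minC1 _] [minC2 _]; rewrite /mult !card_sum_mem -!big_split.
apply: eq_bigr => i _; have := S_max_S_min_count e hP (minC1 i) (minC2 i).
by rewrite !inE.
Qed.
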